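(* Let $q\geq2$ and $0<\alpha<1/q$. There exists a deterministic algorithm for Anti-$q$-SG which on every input of length $n$ incurs a cost of at most $\alpha n$ and which reads $$b=K_{1/q}(\alpha)\,n+O(\log n+\log\log q)=(1-h_q(1-\alpha))\,n\log_2q+O(\log n+\log\log q)$$ bits of advice.
   Context: Anti-$q$-SG: inputs $(n,x_1,\dots,x_n)$ with $x_i\in[q]$; in round $i$ the algorithm knows $n,x_1,\dots,x_{i-1}$ and outputs $y_i\in[q]$, paying $1$ if $y_i=x_i$ and $0$ otherwise; $n$ is the length. Advice is read from an infinite tape prepared by an oracle knowing the whole input. $K_y(x)=x\log_2(x/y)+(1-x)\log_2((1-x)/(1-y))$; $h_q(x)=x\log_q(q-1)-x\log_qx-(1-x)\log_q(1-x)$. *)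

From Stdlib Require Import Reals Lra Lia List.
Import ListNotations.
Open Scope R_scope.

Definition log2 (x : R) : R := ln x / ln 2.
Definition logb (b x : R) : R := ln x / ln b.

Definition Kdiv (y x : R) : R :=
  x * log2 (x / y) + (1 - x) * log2 ((1 - x) / (1 - y)).

Definition hq (q x : R) : R :=
  x * logb q (q - 1) - x * logb q x - (1 - x) * logb q (1 - x).

(* The alphabet [q] is represented as {0, ..., q-1}.
   An input (n, x_1, ..., x_n) is a list x of length n with entries < q. *)
Definition valid_input (q : nat) (x : list nat) : Prop :=
  forall a, In a x -> (a < q)%nat.

Definition tape := nat -> bool.

(* A deterministic online algorithm with advice: in round i (0-based here),
   given n, the revealed prefix x_1..x_{i-1} and the advice tape, it outputs y_i. *)
Definition algorithm := nat -> list nat -> tape -> nat.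

Definition oracle := list nat -> tape.

Definition out (A : algorithm) (x : list nat) (t : tape) (i : nat) : nat :=
  A (length x) (firstn i x) t.

Definition cost (A : algorithm) (O : oracle) (x : list nat) : nat :=
  length (filter (fun i => Nat.eqb (out A x (O x) i) (nth i x 0%nat))
                 (seq 0 (length x))).

(* On input x, A reads at most b bits of the tape O x: its whole behaviour
   is determined by the first b bits (any tape agreeing with O x on the
   positions j < b yields the same outputs in every round). *)
Definition reads_at_most (A : algorithm) (O : oracle) (x : list nat) (b : R) : Prop :=
  forall t' : tape, (forall j : nat, INR j < b -> t' j = O x j) ->
  forall i : nat, (i < length x)%nat -> out A x t' i = out A x (O x) i.

(* An algorithm that plays a fixed word [y] of length [n] pays exactly the number of positions where
   [y] agrees with the input, so it suffices that the oracle can name, with few bits, a word agreeing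
   with the input in at most [m = floor (alpha n)] positions.  Every input is agreed with in at most
   [m] positions by at least [V = C(n,m) (q-1)^(n-m)] of the [q^n] words, so repeatedly picking the
   word that serves the most remaining inputs serves all of them after about [(q^n / V) ln q^n] picks.
   Finally [V / q^n] is the binomial probability of [m] successes with success rate [1/q]; comparing
   it with the binomial probability at rate [m/n], which is at least [1/(n+1)] since [m] is then the
   mode, gives [log2 (q^n / V) <= K_{1/q}(alpha) n + O(log n)]. *)

From Stdlib Require Import Reals List.
From Stdlib Require Import Lra Lia Binomial ZArith ClassicalEpsilon.
Import ListNotations.
Open Scope R_scope.

Lemma ln_le (x y : R) : 0 < x -> x <= y -> ln x <= ln y.
Proof. intros Hx [Hxy | <-]; [left; apply ln_increasing |]; lra. Qed.

Lemma ln_div (x y : R) : 0 < x -> 0 < y -> ln (x / y) = ln x - ln y.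
Proof.
  intros Hx Hy. unfold Rdiv. rewrite ln_mult, ln_Rinv; try lra.
  now apply Rinv_0_lt_compat.
Qed.

Lemma ln_le_sub_1 (x : R) : 0 < x -> ln x <= x - 1.
Proof. intros Hx. pose proof (exp_ineq1_le (ln x)). rewrite exp_ln in H; lra. Qed.

Lemma ln_nonneg (x : R) : 1 <= x -> 0 <= ln x.
Proof. intros Hx. rewrite <- ln_1. apply ln_le; lra. Qed.

Lemma exp_pow (x : R) (k : nat) : exp x ^ k = exp (INR k * x).
Proof.
  induction k as [|k IH]; [simpl; now rewrite Rmult_0_l, exp_0|].
  rewrite S_INR. simpl pow. rewrite IH, <- exp_plus. f_equal; ring.
Qed.

Lemma ln_2_pos : 0 < ln 2.
Proof. pose proof ln_lt_2; lra. Qed.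

Lemma ln_2_lt_1 : ln 2 < 1.
Proof.
  rewrite <- (ln_exp 1). apply ln_increasing; [lra |].
  pose proof (exp_ineq1 1); lra.
Qed.

Lemma Kdiv_ln (p x : R) : 0 < p < 1 -> 0 < x < 1 ->
  Kdiv p x * ln 2 = x * ln x - x * ln p + (1 - x) * ln (1 - x) - (1 - x) * ln (1 - p).
Proof.
  intros Hp Hx. pose proof ln_2_pos.
  unfold Kdiv, log2. rewrite !ln_div by lra. field. lra.
Qed.

Lemma Kdiv_hq (Q a : R) : 1 < Q -> 0 < a < 1 / Q ->
  Kdiv (1 / Q) a = (1 - hq Q (1 - a)) * log2 Q.
Proof.
  intros HQ Ha.
  assert (HaQ : a * Q < 1).
  { destruct Ha as [_ Ha]. apply (Rmult_lt_compat_r Q) in Ha; [|lra]. field_simplify in Ha; lra. }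
  assert (Hp : 0 < 1 / Q < 1).
  { split; [apply Rdiv_lt_0_compat; lra|]. apply (Rmult_lt_reg_r Q); [lra|]. field_simplify; lra. }
  assert (ln Q > 0) by (rewrite <- ln_1; apply ln_increasing; lra).
  pose proof ln_2_pos.
  apply (Rmult_eq_reg_r (ln 2)); [|lra].
  rewrite Kdiv_ln by nra. unfold hq, logb, log2.
  replace (1 - (1 - a)) with a by ring.
  replace (1 - 1 / Q) with ((Q - 1) / Q) by (field; lra).
  rewrite !ln_div by lra. rewrite ln_1.
  field. lra.
Qed.

(** * Words and agreements *)

Definition countb {A : Type} (P : A -> bool) (l : list A) : nat := length (filter P l).

Lemma countb_map {A B : Type} (P : B -> bool) (f : A -> B) (l : list A) :
  countb P (map f l) = countb (fun a => P (f a)) l.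
Proof. unfold countb. induction l as [|a l IH]; simpl; auto. destruct (P (f a)); simpl; auto. Qed.

Lemma countb_filter {A : Type} (P R : A -> bool) (l : list A) :
  countb P (filter R l) = countb (fun a => andb (R a) (P a)) l.
Proof.
  unfold countb. induction l as [|a l IH]; simpl; auto.
  destruct (R a); simpl; [destruct (P a); simpl|]; rewrite IH; auto.
Qed.

Lemma countb_flat_map {A B : Type} (P : B -> bool) (F : A -> list B) (l : list A) :
  countb P (flat_map F l) = list_sum (map (fun a => countb P (F a)) l).
Proof.
  unfold countb. induction l as [|a l IH]; simpl; auto.
  rewrite filter_app, length_app, IH. auto.
Qed.

Lemma list_sum_map_const {A : Type} (g : A -> nat) (c : nat) (l : list A) :
  (forall a, In a l -> g a = c) -> list_sum (map g l) = (length l * c)%nat.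
Proof.
  induction l as [|a l IH]; intros Hg; simpl; [reflexivity|].
  rewrite Hg, IH; [lia | intros; apply Hg; simpl; auto | simpl; auto].
Qed.

Lemma list_sum_map_seq_single (g : nat -> nat) (a c q : nat) : (a < q)%nat ->
  (forall b, b <> a -> g b = c) -> list_sum (map g (seq 0 q)) = (g a + (q - 1) * c)%nat.
Proof.
  intros Ha Hg.
  replace q with (a + S (q - S a))%nat at 1 by lia.
  rewrite seq_app, map_app, list_sum_app. simpl.
  rewrite !(list_sum_map_const g c), !length_seq.
  - replace (q - 1)%nat with (a + (q - S a))%nat by lia. ring.
  - intros b Hb. apply in_seq in Hb. apply Hg. lia.
  - intros b Hb. apply in_seq in Hb. apply Hg. lia.
Qed.

Fixpoint agreements (x y : list nat) : nat :=
  match x, y with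
  | a :: x', b :: y' => (Nat.b2n (Nat.eqb a b) + agreements x' y')%nat
  | _, _ => 0%nat
  end.

Lemma agreements_spec (x y : list nat) : length y = length x ->
  agreements x y = countb (fun i => Nat.eqb (nth i y 0%nat) (nth i x 0%nat)) (seq 0 (length x)).
Proof.
  revert y; induction x as [|a x IH]; intros [|b y] Hl; simpl in Hl; try lia; [reflexivity|].
  cbn [length seq]. rewrite <- seq_shift. unfold countb. cbn [filter nth agreements].
  rewrite (Nat.eqb_sym a b), IH by lia. unfold countb.
  destruct (Nat.eqb b a); cbn; [f_equal|]; symmetry; exact (countb_map _ S _).
Qed.

Fixpoint words (q n : nat) : list (list nat) :=
  match n with
  | O => [[]]
  | S n' => flat_map (fun b => map (cons b) (words q n')) (seq 0 q)
  end.

Lemma length_words (q n : nat) : length (words q n) = (q ^ n)%nat.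
Proof.
  induction n as [|n IH]; simpl; auto.
  rewrite length_flat_map, (list_sum_map_const _ (q ^ n)), length_seq; [lia|].
  intros; rewrite length_map; auto.
Qed.

Lemma in_words (q n : nat) (y : list nat) :
  In y (words q n) <-> length y = n /\ valid_input q y.
Proof.
  revert y; induction n as [|n IH]; intros y; simpl.
  - split.
    + intros [<- | []]. split; auto. intros a [].
    + intros [Hl _]. destruct y; [auto | discriminate].
  - rewrite in_flat_map. split.
    + intros [b [Hb Hy]]. apply in_map_iff in Hy as [y' [<- Hy']].
      apply IH in Hy' as [Hl Hv]. apply in_seq in Hb.
      split; simpl; auto. intros c [<- | Hc]; [lia | auto].
    + intros [Hl Hv]. destruct y as [|b y]; [discriminate|].
      exists b. split.
      * apply in_seq. assert (b < q)%nat by (apply Hv; simpl; auto). lia.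
      * apply in_map, IH. split; [simpl in Hl; lia|]. intros c Hc; apply Hv; simpl; auto.
Qed.

Lemma countb_words_S (q n a : nat) (x : list nat) (P : nat -> bool) : (a < q)%nat ->
  countb (fun y => P (agreements (a :: x) y)) (words q (S n)) =
  (countb (fun y => P (S (agreements x y))) (words q n)
   + (q - 1) * countb (fun y => P (agreements x y)) (words q n))%nat.
Proof.
  intros Ha. cbn [words]. rewrite countb_flat_map.
  rewrite (list_sum_map_seq_single _ a (countb (fun y => P (agreements x y)) (words q n))); [| exact Ha |].
  - rewrite countb_map. cbn [agreements]. rewrite Nat.eqb_refl. reflexivity.
  - intros b Hb. rewrite countb_map. cbn [agreements].
    apply Nat.eqb_neq in Hb. rewrite Nat.eqb_sym, Hb. reflexivity.
Qed.

Lemma C_n_0 (n : nat) : C n 0 = 1.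
Proof. unfold C. rewrite Nat.sub_0_r. simpl. field. apply INR_fact_neq_0. Qed.

Lemma C_n_n (n : nat) : C n n = 1.
Proof. unfold C. rewrite Nat.sub_diag. simpl. field. apply INR_fact_neq_0. Qed.

Lemma C_pos (n j : nat) : (j <= n)%nat -> 0 < C n j.
Proof.
  intros. unfold C. apply Rdiv_lt_0_compat; [|apply Rmult_lt_0_compat]; apply INR_fact_lt_0.
Qed.

Lemma ball_size_lb (q : nat) : (1 <= q)%nat -> forall n m x, valid_input q x -> length x = n ->
  (m <= n)%nat ->
  C n m * INR (q - 1) ^ (n - m) <= INR (countb (fun y => agreements x y <=? m) (words q n)).
Proof.
  intros Hq n. induction n as [|n IH]; intros m x Hv Hl Hm.
  - destruct x; [|discriminate]. replace m with 0%nat by lia. rewrite C_n_0. simpl. lra.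
  - destruct x as [|a x]; [discriminate|]. injection Hl as Hl.
    assert (Hv' : valid_input q x) by (intros c Hc; apply Hv; simpl; auto).
    assert (Ha : (a < q)%nat) by (apply Hv; simpl; auto).
    rewrite (countb_words_S q n a x (fun k => k <=? m)), plus_INR, mult_INR by exact Ha.
    assert (0 <= INR (q - 1)) by apply pos_INR.
    destruct m as [|m].
    + rewrite C_n_0. simpl (_ - _)%nat.
      specialize (IH 0%nat x Hv' Hl ltac:(lia)). rewrite C_n_0, Nat.sub_0_r in IH.
      simpl. pose proof (pos_INR (countb (fun _ => false) (words q n))). nra.
    + assert (Hsucc : forall y, (S (agreements x y) <=? S m) = (agreements x y <=? m)) by reflexivity.
      unfold countb at 1. rewrite (filter_ext _ _ Hsucc). fold (countb (fun y => agreements x y <=? m) (words q n)).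
      destruct (Nat.eq_dec m n) as [-> | Hmn].
      * rewrite C_n_n, Nat.sub_diag in *. specialize (IH n x Hv' Hl ltac:(lia)).
        rewrite C_n_n, Nat.sub_diag in IH. simpl in IH |- *.
        pose proof (pos_INR (countb (fun y => agreements x y <=? S n) (words q n))). nra.
      * pose proof (IH m x Hv' Hl ltac:(lia)) as I1. pose proof (IH (S m) x Hv' Hl ltac:(lia)) as I2.
        rewrite <- pascal by lia.
        replace (S n - S m)%nat with (S (n - S m)) by lia.
        replace (n - m)%nat with (S (n - S m)) in I1 by lia. simpl in I1 |- *. nra.
Qed.

Lemma ball_volume_le (q n m : nat) : (1 <= q)%nat -> (m <= n)%nat ->
  C n m * INR (q - 1) ^ (n - m) <= INR q ^ n.
Proof.
  intros Hq Hmn. rewrite <- (pow_INR q n), <- (length_words q n).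
  eapply Rle_trans; [apply (ball_size_lb q Hq n m (repeat 0%nat n)) | apply le_INR, filter_length_le].
  - intros c Hc. apply repeat_spec in Hc. lia.
  - apply repeat_length.
  - exact Hmn.
Qed.

(** * Greedy covering *)

Lemma list_sum_le_max {A : Type} (g : A -> nat) (l : list A) : l <> [] ->
  exists2 y, In y l & (list_sum (map g l) <= g y * length l)%nat.
Proof.
  induction l as [|a l IH]; intros Hl; [congruence|].
  destruct l as [|b l].
  - exists a; simpl; auto; lia.
  - destruct IH as [y Hy Hle]; [discriminate|].
    destruct (Nat.le_gt_cases (g y) (g a)).
    + exists a; [simpl; auto|]. simpl in *. nia.
    + exists y; [simpl; auto|]. simpl in *. nia.
Qed.

Section GreedyCover.

Variables (X Y : Type) (near : X -> Y -> bool).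

Lemma sum_countb_swap (U : list X) (W : list Y) :
  list_sum (map (fun y => countb (fun x => near x y) U) W) =
  list_sum (map (fun x => countb (near x) W) U).
Proof.
  induction U as [|a U IH].
  - rewrite (list_sum_map_const _ 0%nat); [simpl; lia | reflexivity].
  - change (list_sum (map (fun x => countb (near x) W) (a :: U)))
      with (countb (near a) W + list_sum (map (fun x => countb (near x) W) U))%nat.
    transitivity (list_sum (map (fun y => Nat.b2n (near a y) + countb (fun x => near x y) U)%nat W)).
    { f_equal. apply map_ext. intros y. unfold countb. simpl. destruct (near a y); reflexivity. }
    rewrite <- IH. unfold countb. clear. induction W as [|b W IHW]; simpl; auto.
    rewrite IHW. destruct (near a b); simpl; lia.
Qed.

Lemma exists_popular (U : list X) (W : list Y) (V : R) : W <> [] ->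
  (forall x, In x U -> V <= INR (countb (near x) W)) ->
  exists2 y, In y W & INR (length U) * V <= INR (countb (fun x => near x y) U) * INR (length W).
Proof.
  intros HW HV.
  destruct (list_sum_le_max (fun y => countb (fun x => near x y) U) W HW) as [y Hy Hle].
  exists y; [exact Hy|].
  rewrite sum_countb_swap in Hle. apply le_INR in Hle. rewrite mult_INR in Hle.
  eapply Rle_trans; [|exact Hle]. clear Hle.
  induction U as [|a U IH]; [simpl; lra|].
  change (length (a :: U)) with (S (length U)).
  change (list_sum (map (fun x => countb (near x) W) (a :: U)))
    with (countb (near a) W + list_sum (map (fun x => countb (near x) W) U))%nat.
  rewrite S_INR, plus_INR.
  assert (V <= INR (countb (near a) W)) by (apply HV; simpl; auto).
  assert (INR (length U) * V <= INR (list_sum (map (fun x => countb (near x) W) U)))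
    by (apply IH; intros; apply HV; simpl; auto).
  lra.
Qed.

Definition covered (Ys : list Y) (x : X) : bool := existsb (near x) Ys.

Lemma greedy_cover (W : list Y) (V : R) : 0 < V -> V <= INR (length W) ->
  forall (k : nat) (U : list X), (forall x, In x U -> V <= INR (countb (near x) W)) ->
  exists Ys, length Ys = k /\ incl Ys W /\
    INR (countb (fun x => negb (covered Ys x)) U) <= INR (length U) * (1 - V / INR (length W)) ^ k.
Proof.
  intros HV HVW k. set (s := V / INR (length W)).
  assert (HW : W <> []) by (intros ->; simpl in HVW; lra).
  assert (Hs : 0 < s <= 1).
  { unfold s. split; [apply Rdiv_lt_0_compat; lra|].
    apply (Rmult_le_reg_r (INR (length W))); [lra|]. field_simplify; lra. }
  induction k as [|k IH]; intros U HU.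
  - exists []. split; [reflexivity|]. split; [intros y []|].
    rewrite Rmult_1_r. apply le_INR, filter_length_le.
  - destruct (exists_popular U W V HW HU) as [y Hy Hpop].
    set (U' := filter (fun x => negb (near x y)) U).
    destruct (IH U') as [Ys [HYl [HYW HYc]]].
    { intros x Hx. apply filter_In in Hx. apply HU. tauto. }
    exists (y :: Ys). split; [simpl; auto|]. split; [intros z [<- | Hz]; auto|].
    assert (Hrest : countb (fun x => negb (covered (y :: Ys) x)) U =
                    countb (fun x => negb (covered Ys x)) U').
    { unfold U'. rewrite countb_filter. unfold countb.
      f_equal. apply filter_ext. intros x. unfold covered. simpl.
      destruct (near x y); reflexivity. }
    assert (HU' : (length U' + countb (fun x => near x y) U)%nat = length U).
    { unfold U', countb. rewrite Nat.add_comm. apply filter_length. }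
    assert (HU'le : INR (length U') <= INR (length U) * (1 - s)).
    { apply (f_equal INR) in HU'. rewrite plus_INR in HU'. unfold s.
      assert (INR (length U) * V / INR (length W) <= INR (countb (fun x => near x y) U)).
      { apply (Rmult_le_reg_r (INR (length W))); [lra|]. field_simplify; lra. }
      unfold Rdiv in *. lra. }
    rewrite Hrest. eapply Rle_trans; [exact HYc|].
    pose proof (pow_le (1 - s) k ltac:(lra)). simpl. nra.
Qed.

Lemma greedy_cover_all (W : list Y) (U : list X) (V : R) (k : nat) :
  0 < V -> V <= INR (length W) ->
  (forall x, In x U -> V <= INR (countb (near x) W)) ->
  INR (length U) < exp (INR k * V / INR (length W)) ->
  exists Ys, length Ys = k /\ incl Ys W /\ forall x, In x U -> exists2 y, In y Ys & near x y = true.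
Proof.
  intros HV HVW HU Hk.
  destruct (greedy_cover W V HV HVW k U HU) as [Ys [HYl [HYW HYc]]].
  exists Ys. split; [exact HYl|]. split; [exact HYW|].
  set (s := V / INR (length W)) in *.
  replace (INR k * V / INR (length W)) with (INR k * s) in Hk by (unfold s, Rdiv; ring).
  assert (Hs : 0 <= 1 - s <= exp (- s)).
  { pose proof (exp_ineq1_le (- s)). split; [|lra].
    assert (s <= 1); [|lra].
    unfold s. apply (Rmult_le_reg_r (INR (length W))); [lra|]. field_simplify; lra. }
  assert (Hpow : (1 - s) ^ k <= exp (- (INR k * s))).
  { replace (- (INR k * s)) with (INR k * - s) by ring. rewrite <- exp_pow.
    now apply pow_incr. }
  assert (Huncovered : INR (countb (fun x => negb (covered Ys x)) U) < 1).
  { eapply Rle_lt_trans; [exact HYc|].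
    apply (Rmult_lt_reg_r (exp (INR k * s))); [apply exp_pos|].
    rewrite Rmult_1_l, Rmult_assoc.
    pose proof (pos_INR (length U)).
    assert ((1 - s) ^ k * exp (INR k * s) <= 1); [|nra].
    apply Rle_trans with (exp (- (INR k * s)) * exp (INR k * s)).
    - apply Rmult_le_compat_r; [left; apply exp_pos | exact Hpow].
    - rewrite <- exp_plus, Rplus_opp_l, exp_0. lra. }
  intros x Hx.
  assert (Hnone : countb (fun x => negb (covered Ys x)) U = 0%nat).
  { change 1 with (INR 1) in Huncovered. apply INR_lt in Huncovered. lia. }
  unfold countb in Hnone. apply length_zero_iff_nil in Hnone.
  destruct (covered Ys x) eqn:Hc.
  - apply existsb_exists in Hc as [y [Hy Hxy]]. now exists y.
  - assert (In x (filter (fun x => negb (covered Ys x)) U)) by (apply filter_In; rewrite Hc; auto).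
    rewrite Hnone in H. destruct H.
Qed.

End GreedyCover.

(** * The binomial distribution at its mode *)

Definition binom_pmf (n : nat) (p : R) (j : nat) : R := C n j * p ^ j * (1 - p) ^ (n - j).

Lemma binom_pmf_nonneg (n : nat) (p : R) (j : nat) : 0 <= p <= 1 -> (j <= n)%nat ->
  0 <= binom_pmf n p j.
Proof.
  intros Hp Hj. unfold binom_pmf.
  apply Rmult_le_pos; [apply Rmult_le_pos|]; [left; now apply C_pos | |]; apply pow_le; lra.
Qed.

Lemma binom_pmf_sum (n : nat) (p : R) : sum_f_R0 (binom_pmf n p) n = 1.
Proof.
  unfold binom_pmf. rewrite <- binomial. replace (p + (1 - p)) with 1 by ring. apply pow1.
Qed.

Lemma binom_pmf_succ (n : nat) (p : R) (j : nat) : (j < n)%nat ->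
  binom_pmf n p (S j) * INR (S j) * (1 - p) = binom_pmf n p j * INR (n - j) * p.
Proof.
  intros Hj. unfold binom_pmf, C.
  replace (n - j)%nat with (S (n - S j)) by lia.
  rewrite !fact_simpl, !mult_INR. simpl pow.
  pose proof (INR_fact_neq_0 j). pose proof (INR_fact_neq_0 (n - S j)).
  assert (INR (S j) <> 0) by (apply not_0_INR; lia).
  assert (INR (S (n - S j)) <> 0) by (apply not_0_INR; lia).
  field. repeat split; auto.
Qed.

Lemma le_at_peak (f : nat -> R) (m n : nat) :
  (forall j, (j < m)%nat -> f j <= f (S j)) -> (forall j, (m <= j < n)%nat -> f (S j) <= f j) ->
  forall j, (j <= n)%nat -> f j <= f m.
Proof.
  intros Hup Hdown.
  assert (Hright : forall d, (m + d <= n)%nat -> f (m + d)%nat <= f m).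
  { induction d as [|d IH]; intros Hd; [rewrite Nat.add_0_r; lra|].
    rewrite Nat.add_succ_r. eapply Rle_trans; [apply Hdown; lia | apply IH; lia]. }
  assert (Hleft : forall d, (d <= m)%nat -> f (m - d)%nat <= f m).
  { induction d as [|d IH]; intros Hd; [rewrite Nat.sub_0_r; lra|].
    eapply Rle_trans; [|apply IH; lia].
    replace (m - d)%nat with (S (m - S d)) by lia. apply Hup; lia. }
  intros j Hj. destruct (Nat.le_gt_cases m j).
  - replace j with (m + (j - m))%nat by lia. apply Hright; lia.
  - replace j with (m - (m - j))%nat by lia. apply Hleft; lia.
Qed.

Lemma binom_pmf_mode_lb (n m : nat) : (m < n)%nat ->
  / INR (S n) <= binom_pmf n (INR m / INR n) m.
Proof.
  intros Hmn. set (r := INR m / INR n).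
  assert (Hn : 0 < INR n) by (apply lt_0_INR; lia).
  assert (HmnR : INR m < INR n) by (apply lt_INR; lia).
  assert (Hr : 0 <= r < 1).
  { unfold r. split; [apply Rmult_le_pos; [apply pos_INR | left; now apply Rinv_0_lt_compat]|].
    apply (Rmult_lt_reg_r (INR n)); [lra|]. field_simplify; lra. }
  set (T := binom_pmf n r).
  assert (Hstep : forall j, (j < n)%nat ->
    T (S j) * (INR (S j) * (INR n - INR m)) = T j * (INR (n - j) * INR m)).
  { intros j Hj.
    replace (INR n - INR m) with (INR n * (1 - r)) by (unfold r; field; lra).
    replace (INR m) with (INR n * r) by (unfold r; field; lra).
    transitivity (INR n * (T (S j) * INR (S j) * (1 - r))); [ring|].
    unfold T. rewrite binom_pmf_succ by exact Hj. ring. }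
  assert (HT : forall j, (j <= n)%nat -> 0 <= T j) by (intros; apply binom_pmf_nonneg; [lra | assumption]).
  assert (Hpeak : forall j, (j <= n)%nat -> T j <= T m).
  { apply le_at_peak.
    - intros j Hj. specialize (Hstep j ltac:(lia)).
      assert (Hle : (S j * (n - m) <= (n - j) * m)%nat) by nia.
      apply le_INR in Hle. rewrite !mult_INR, minus_INR in Hle by lia.
      assert (0 < INR (S j) * (INR n - INR m)) by (apply Rmult_lt_0_compat; [apply lt_0_INR; lia | lra]).
      pose proof (HT j ltac:(lia)). pose proof (HT (S j) ltac:(lia)). nra.
    - intros j Hj. specialize (Hstep j ltac:(lia)).
      assert (Hle : ((n - j) * m <= S j * (n - m))%nat) by nia.
      apply le_INR in Hle. rewrite !mult_INR, (minus_INR n m) in Hle by lia.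
      assert (0 < INR (S j) * (INR n - INR m)) by (apply Rmult_lt_0_compat; [apply lt_0_INR; lia | lra]).
      pose proof (HT j ltac:(lia)). pose proof (HT (S j) ltac:(lia)). nra. }
  assert (Hsum : 1 <= T m * INR (S n)).
  { rewrite <- (binom_pmf_sum n r), <- sum_cte. apply sum_Rle. exact Hpeak. }
  assert (0 < INR (S n)) by (apply lt_0_INR; lia).
  apply (Rmult_le_reg_r (INR (S n))); [lra|]. rewrite Rinv_l; lra.
Qed.

(** * Entropy estimates *)

Lemma ln_binom_pmf (n m : nat) (p : R) : 0 <= p < 1 -> ((0 < m)%nat -> 0 < p) -> (m <= n)%nat ->
  ln (binom_pmf n p m) = ln (C n m) + INR m * ln p + INR (n - m) * ln (1 - p).
Proof.
  intros Hp Hpm Hmn. unfold binom_pmf.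
  assert (Hpow : 0 < p ^ m /\ ln (p ^ m) = INR m * ln p).
  { destruct m as [|m]; [simpl; rewrite ln_1; split; lra|].
    split; [apply pow_lt|apply ln_pow]; apply Hpm; lia. }
  destruct Hpow as [Hpow Hlnpow].
  pose proof (C_pos n m Hmn).
  assert (0 < (1 - p) ^ (n - m)) by (apply pow_lt; lra).
  rewrite ln_mult by (try apply Rmult_lt_0_compat; lra).
  rewrite ln_mult, Hlnpow, ln_pow by lra.
  reflexivity.
Qed.

Lemma ball_fraction (q n m : nat) : (0 < q)%nat -> (m <= n)%nat ->
  C n m * INR (q - 1) ^ (n - m) = INR q ^ n * binom_pmf n (1 / INR q) m.
Proof.
  intros Hq Hmn. unfold binom_pmf.
  assert (Hqr : 0 < INR q) by (apply lt_0_INR; lia).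
  rewrite minus_INR by lia. simpl INR.
  replace (1 - 1 / INR q) with ((INR q - 1) * / INR q) by (field; lra).
  replace (INR q ^ n) with (INR q ^ m * INR q ^ (n - m)) by (rewrite <- pow_add; f_equal; lia).
  rewrite Rpow_mult_distr. unfold Rdiv. rewrite Rmult_1_l, !pow_inv.
  field. split; apply pow_nonzero; lra.
Qed.

Lemma floor_gap_mul_neg_ln_le (N M a : R) :
  1 <= N -> 0 <= M <= a * N -> a * N < M + 1 -> (M = 0 \/ 1 <= M) -> 0 < a ->
  (a * N - M) * - ln a <= ln N + 1.
Proof.
  intros HN [HM0 HMa] HMa1 HM Ha. set (t := a * N - M).
  assert (Ht : 0 <= t < 1) by (unfold t; lra).
  assert (HlnN : 0 <= ln N) by (apply ln_nonneg; lra).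
  replace (- ln a) with (ln N - ln (a * N)) by (rewrite ln_mult by lra; ring).
  destruct (Rle_or_lt 1 (a * N)) as [HaN | HaN].
  - assert (0 <= ln (a * N)) by (apply ln_nonneg; lra). nra.
  - assert (Et : t = a * N) by (unfold t; destruct HM; lra).
    assert (Hinv : ln (/ (a * N)) <= / (a * N) - 1) by (apply ln_le_sub_1, Rinv_0_lt_compat; nra).
    rewrite ln_Rinv in Hinv by nra.
    assert (t * - ln (a * N) <= t * (/ (a * N) - 1)) by (apply Rmult_le_compat_l; lra).
    replace (t * (/ (a * N) - 1)) with (1 - t) in H by (rewrite Et; field; nra).
    nra.
Qed.

(* Replacing [a] by the grid point [M / N] just below it costs at most [ln N + 3] nats in total:
   the slope of the relative entropy at [M / N] is at most about [ln N], and [a N - M < 1]. *)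
Lemma relative_entropy_floor_le (N M a p : R) :
  1 <= N -> 0 <= M <= a * N -> a * N < M + 1 -> (M = 0 \/ 1 <= M) -> 0 < a -> a < p -> p <= 1 / 2 ->
  M * ln (M / N) + (N - M) * ln (1 - M / N) - M * ln p - (N - M) * ln (1 - p)
  <= N * (a * ln a - a * ln p + (1 - a) * ln (1 - a) - (1 - a) * ln (1 - p)) + ln N + 3.
Proof.
  intros HN [HM0 HMa] HMa1 HM Ha Hap Hp.
  set (t := a * N - M).
  assert (Ht : 0 <= t < 1) by (unfold t; lra).
  assert (HrN : M / N <= a) by (apply (Rmult_le_reg_r N); [lra|]; field_simplify; lra).
  assert (Hp_side : t * (ln p - ln (1 - p)) <= 0).
  { assert (ln p <= ln (1 - p)) by (apply ln_le; lra).
    assert (0 <= t * (ln (1 - p) - ln p)) by (apply Rmult_le_pos; lra). lra. }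
  pose proof (floor_gap_mul_neg_ln_le N M a HN (conj HM0 HMa) HMa1 HM Ha) as Hslope. fold t in Hslope.
  assert (Hfirst : M * ln (M / N) - N * a * ln a <= t * - ln a).
  { destruct HM as [HM | HM].
    - unfold t. rewrite HM. lra.
    - assert (ln (M / N) <= ln a) by (apply ln_le; [apply Rdiv_lt_0_compat |]; lra).
      unfold t. nra. }
  assert (Hsecond : (N - M) * ln (1 - M / N) - N * (1 - a) * ln (1 - a) <= 2 * t).
  { replace ((N - M) * ln (1 - M / N) - N * (1 - a) * ln (1 - a))
      with ((N - M) * ln ((1 - M / N) / (1 - a)) + t * ln (1 - a))
      by (rewrite ln_div by lra; unfold t; ring).
    assert (ln (1 - a) <= 0) by (rewrite <- ln_1; apply ln_le; lra).
    assert (Hlog : ln ((1 - M / N) / (1 - a)) <= (1 - M / N) / (1 - a) - 1)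
      by (apply ln_le_sub_1, Rdiv_lt_0_compat; lra).
    assert (HNM : 0 <= N - M) by nra.
    assert (Hlin : (N - M) * ((1 - M / N) / (1 - a) - 1) <= 2 * t).
    { replace ((N - M) * ((1 - M / N) / (1 - a) - 1)) with ((N - M) / N * (t / (1 - a)))
        by (unfold t; field; lra).
      assert ((N - M) / N <= 1) by (apply (Rmult_le_reg_r N); [lra|]; field_simplify; lra).
      assert (t / (1 - a) <= 2 * t) by (apply (Rmult_le_reg_r (1 - a)); [lra|]; field_simplify; nra).
      assert (0 <= (N - M) / N) by (apply Rmult_le_pos; [lra | left; apply Rinv_0_lt_compat; lra]).
      assert (0 <= t / (1 - a)) by (apply Rmult_le_pos; [lra | left; apply Rinv_0_lt_compat; lra]).
      nra. }
    assert ((N - M) * ln ((1 - M / N) / (1 - a)) <= (N - M) * ((1 - M / N) / (1 - a) - 1))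
      by (apply Rmult_le_compat_l; auto).
    nra. }
  replace (M * ln (M / N) + (N - M) * ln (1 - M / N) - M * ln p - (N - M) * ln (1 - p))
    with ((M * ln (M / N) - N * a * ln a) + ((N - M) * ln (1 - M / N) - N * (1 - a) * ln (1 - a))
          + t * (ln p - ln (1 - p))
          + N * (a * ln a - a * ln p + (1 - a) * ln (1 - a) - (1 - a) * ln (1 - p)))
    by (unfold t; ring).
  lra.
Qed.

Lemma ln_volume_ratio_le (q n m : nat) (a : R) : (2 <= q)%nat -> (1 <= n)%nat -> (m < n)%nat ->
  INR m <= a * INR n < INR m + 1 -> 0 < a < 1 / INR q ->
  ln (INR q ^ n) - ln (C n m * INR (q - 1) ^ (n - m)) <=
  Kdiv (1 / INR q) a * ln 2 * INR n + ln (INR n) + ln (INR n + 1) + 3.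
Proof.
  intros Hq Hn Hmn [Hm1 Hm2] [Ha1 Ha2].
  set (p := 1 / INR q). set (N := INR n). set (M := INR m). fold p in Ha2.
  assert (Hqr : 2 <= INR q) by (apply (le_INR 2); lia).
  assert (HN : 1 <= N) by (apply (le_INR 1); lia).
  assert (HMN : M < N) by (apply lt_INR; lia).
  assert (HM0 : 0 <= M) by apply pos_INR.
  assert (Hp : 0 < p <= 1 / 2).
  { unfold p. split; [apply Rdiv_lt_0_compat; lra|].
    apply Rmult_le_compat_l; [lra|]. apply Rinv_le_contravar; lra. }
  assert (Hmode : - ln (N + 1) <= ln (binom_pmf n (M / N) m)).
  { pose proof (binom_pmf_mode_lb n m Hmn) as Hlb. rewrite S_INR in Hlb. fold N M in Hlb.
    rewrite <- ln_Rinv by lra. apply ln_le; [apply Rinv_0_lt_compat; lra | exact Hlb]. }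
  rewrite ln_binom_pmf in Hmode.
  3: { intros. apply Rdiv_lt_0_compat; [apply lt_0_INR; lia | lra]. }
  2: { split; [apply Rmult_le_pos; [lra | left; apply Rinv_0_lt_compat; lra]|].
       apply (Rmult_lt_reg_r N); [lra|]. field_simplify; lra. }
  2: lia.
  assert (Hpmf : 0 < binom_pmf n p m).
  { unfold binom_pmf. pose proof (C_pos n m ltac:(lia)).
    assert (0 < p ^ m) by (apply pow_lt; lra). assert (0 < (1 - p) ^ (n - m)) by (apply pow_lt; lra).
    apply Rmult_lt_0_compat; [apply Rmult_lt_0_compat|]; lra. }
  rewrite ball_fraction by lia. fold p.
  rewrite ln_mult by (try apply pow_lt; lra).
  rewrite ln_binom_pmf by (lra || lia).
  rewrite minus_INR in * by lia. fold N M in Hmode |- *.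
  pose proof (relative_entropy_floor_le N M a p HN (conj HM0 Hm1) Hm2 ltac:(destruct m; [left | right]; [reflexivity | apply (le_INR 1); lia]) Ha1 Ha2 (proj2 Hp)) as Hrel.
  assert (Hkl : Kdiv p a * ln 2 * N = N * (Kdiv p a * ln 2)) by ring.
  rewrite Hkl, Kdiv_ln by lra.
  lra.
Qed.

(** * Short covering codes *)

Definition floor_nat (x : R) : nat := Z.to_nat (Int_part x).

Lemma floor_nat_spec (x : R) : 0 <= x -> INR (floor_nat x) <= x < INR (floor_nat x) + 1.
Proof.
  intros Hx. destruct (base_Int_part x) as [H1 H2]. unfold floor_nat.
  assert (0 <= Int_part x)%Z.
  { apply Z.lt_pred_le. apply lt_IZR. simpl. lra. }
  rewrite INR_IZR_INZ, Z2Nat.id by assumption. lra.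
Qed.

Lemma le_pow2_floor_nat (x B : R) : 1 <= x -> ln x <= (B - 1) * ln 2 -> x <= 2 ^ floor_nat B.
Proof.
  intros Hx Hln. pose proof ln_2_pos. pose proof (ln_nonneg x Hx).
  assert (HB : 0 <= B) by nra.
  destruct (floor_nat_spec B HB) as [_ HBfl].
  rewrite <- (exp_ln x), <- (exp_ln 2), exp_pow by lra.
  left. apply exp_increasing. nra.
Qed.

(* The code has about [(Q / V) ln Q] words; besides [K N] bits this costs [3 ln N + ln ln qr + 3 + 2 ln 2]
   nats, which the constant 20 absorbs as soon as [N >= 2]. *)
Lemma ln_code_size_le (qr N Q V K : R) : 2 <= qr -> 2 <= N -> 0 < V <= Q -> ln Q = N * ln qr ->
  ln Q - ln V <= K * ln 2 * N + ln N + ln (N + 1) + 3 ->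
  ln (Q / V * ln Q + 1) <= (K * N + 20 * (log2 N + log2 (log2 qr)) - 1) * ln 2.
Proof.
  intros Hqr HN [HV HVQ] HlnQ Hratio.
  pose proof ln_2_pos as Hl2. pose proof ln_2_lt_1. pose proof ln_lt_2.
  assert (HlnN : ln 2 <= ln N) by (apply ln_le; lra).
  assert (Hlnqr : ln 2 <= ln qr) by (apply ln_le; lra).
  assert (HQV : 1 <= Q / V) by (apply (Rmult_le_reg_r V); [lra|]; field_simplify; lra).
  assert (HlnQ1 : 1 <= ln Q) by (rewrite HlnQ; nra).
  set (X := Q / V * ln Q).
  assert (HX : 1 <= X) by (unfold X; nra).
  assert (Hlog2 : 1 <= log2 qr).
  { unfold log2. apply (Rmult_le_reg_r (ln 2)); [lra|]. field_simplify; lra. }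
  assert (HLL : ln (ln qr) <= ln 2 * log2 (log2 qr)).
  { replace (ln 2 * log2 (log2 qr)) with (ln (log2 qr))
      by (change (log2 (log2 qr)) with (ln (log2 qr) / ln 2); field; lra).
    apply ln_le; [lra|]. unfold log2.
    apply (Rmult_le_reg_r (ln 2)); [lra|]. field_simplify; nra. }
  assert (HLL0 : 0 <= ln 2 * log2 (log2 qr)).
  { apply Rmult_le_pos; [lra|]. unfold log2 at 1.
    apply Rmult_le_pos; [apply ln_nonneg; lra | left; apply Rinv_0_lt_compat; lra]. }
  assert (HN1 : ln (N + 1) <= ln 2 + ln N) by (rewrite <- ln_mult by lra; apply ln_le; lra).
  assert (HX1 : ln (X + 1) <= ln 2 + (ln Q - ln V) + ln N + ln (ln qr)).
  { apply Rle_trans with (ln (2 * X)); [apply ln_le; lra|].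
    assert (0 < Q / V) by (apply Rdiv_lt_0_compat; lra).
    unfold X. rewrite (ln_mult 2), (ln_mult (Q / V)), ln_div by nra.
    rewrite HlnQ at 2. rewrite ln_mult by lra. lra. }
  assert (Hlog2N : log2 N * ln 2 = ln N) by (unfold log2; field; lra).
  replace ((K * N + 20 * (log2 N + log2 (log2 qr)) - 1) * ln 2)
    with (K * ln 2 * N + 20 * (log2 N * ln 2) + 20 * (ln 2 * log2 (log2 qr)) - ln 2) by ring.
  rewrite Hlog2N. lra.
Qed.

Lemma covering_code (q n m : nat) : (2 <= q)%nat -> (m <= n)%nat ->
  exists Ys, incl Ys (words q n) /\ (1 <= length Ys)%nat /\
    (forall x, valid_input q x -> length x = n -> exists2 y, In y Ys & (agreements x y <= m)%nat) /\
    INR (length Ys) <= INR q ^ n / (C n m * INR (q - 1) ^ (n - m)) * ln (INR q ^ n) + 1.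
Proof.
  intros Hq Hmn.
  set (V := C n m * INR (q - 1) ^ (n - m)). set (W := words q n). set (Q := INR (length W)).
  assert (HQ : Q = INR q ^ n) by (unfold Q, W; rewrite length_words, pow_INR; reflexivity).
  rewrite <- HQ.
  assert (HV : 0 < V).
  { unfold V. apply Rmult_lt_0_compat; [now apply C_pos|].
    apply pow_lt. apply (lt_INR 0). lia. }
  assert (Hball : forall x, In x W -> V <= INR (countb (fun y => agreements x y <=? m) W)).
  { intros x Hx. apply in_words in Hx as [Hl Hv]. apply ball_size_lb; auto; lia. }
  assert (HVQ : V <= Q) by (rewrite HQ; apply ball_volume_le; lia).
  assert (HlnQ : 0 <= ln Q) by (apply ln_nonneg; rewrite HQ; apply pow_R1_Rle, (le_INR 1); lia).
  set (X := Q / V * ln Q).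
  assert (HX : 0 <= X) by (apply Rmult_le_pos; [apply Rlt_le, Rdiv_lt_0_compat|]; lra).
  set (k := S (floor_nat X)).
  assert (Hk : X < INR k <= X + 1) by (unfold k; rewrite S_INR; pose proof (floor_nat_spec X HX); lra).
  assert (Hexp : INR (length W) < exp (INR k * V / INR (length W))).
  { fold Q. rewrite <- (exp_ln Q) at 1 by lra. apply exp_increasing.
    apply (Rmult_lt_reg_r (Q / V)); [apply Rdiv_lt_0_compat; lra|].
    replace (INR k * V / Q * (Q / V)) with (INR k) by (field; lra). unfold X in Hk. lra. }
  destruct (greedy_cover_all _ _ (fun x y => agreements x y <=? m) W W V k HV HVQ Hball Hexp)
    as [Ys [HYl [HYW HYc]]].
  exists Ys. split; [exact HYW|]. split; [rewrite HYl; unfold k; lia|]. split.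
  - intros x Hv Hl. destruct (HYc x (proj2 (in_words q n x) (conj Hl Hv))) as [y Hy Hxy].
    exists y; [exact Hy | now apply Nat.leb_le].
  - rewrite HYl. lra.
Qed.

Lemma short_covering_code (q : nat) (a : R) (n : nat) : (2 <= q)%nat -> 0 < a < 1 / INR q ->
  exists (Ys : list (list nat)) (L : nat), incl Ys (words q n) /\
    (forall x, valid_input q x -> length x = n ->
       exists2 y, In y Ys & (agreements x y <= floor_nat (a * INR n))%nat) /\
    (length Ys <= 2 ^ L)%nat /\
    ((2 <= n)%nat ->
     INR L <= Kdiv (1 / INR q) a * INR n + 20 * (log2 (INR n) + log2 (log2 (INR q)))).
Proof.
  intros Hq Ha. set (m := floor_nat (a * INR n)).
  assert (Hqr : 2 <= INR q) by (apply (le_INR 2); lia).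
  assert (Ha2 : a < 1 / 2).
  { enough (1 / INR q <= 1 / 2) by lra.
    apply Rmult_le_compat_l; [lra|]. apply Rinv_le_contravar; lra. }
  pose proof (pos_INR n) as Hn0.
  destruct (floor_nat_spec (a * INR n)) as [Hm1 Hm2]; [nra|]. fold m in Hm1, Hm2.
  assert (Hmn : (m <= n)%nat) by (apply INR_le; nra).
  destruct (covering_code q n m Hq Hmn) as [Ys [HYW [HY1 [HYc HYk]]]].
  destruct (le_lt_dec 2 n) as [Hn | Hn].
  2: { exists Ys, (length Ys). repeat split; auto; [|lia].
       apply Nat.lt_le_incl, Nat.pow_gt_lin_r; lia. }
  set (B := Kdiv (1 / INR q) a * INR n + 20 * (log2 (INR n) + log2 (log2 (INR q)))).
  assert (HnR : 2 <= INR n) by (apply (le_INR 2); lia).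
  assert (HY1R : 1 <= INR (length Ys)) by (apply (le_INR 1); lia).
  assert (Hln : ln (INR (length Ys)) <= (B - 1) * ln 2).
  { eapply Rle_trans; [apply ln_le; [lra | exact HYk]|].
    apply ln_code_size_le; [lra | lra | | |].
    - split; [apply Rmult_lt_0_compat; [apply C_pos; lia | apply pow_lt, (lt_INR 0); lia]|].
      apply ball_volume_le; lia.
    - apply ln_pow. lra.
    - apply ln_volume_ratio_le; [lia | lia | apply INR_lt; nra | lra | exact Ha]. }
  exists Ys, (floor_nat B). split; [exact HYW|]. split; [exact HYc|]. split.
  - apply INR_le. rewrite pow_INR. replace (INR 2) with 2 by (simpl; lra).
    now apply le_pow2_floor_nat.
  - intros _. pose proof (ln_nonneg _ HY1R). pose proof ln_2_pos.
    apply floor_nat_spec. nra.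
Qed.

Lemma short_covering_codes (q : nat) (a : R) : (2 <= q)%nat -> 0 < a < 1 / INR q ->
  exists (code : nat -> list (list nat)) (L : nat -> nat), forall n,
    incl (code n) (words q n) /\
    (forall x, valid_input q x -> length x = n ->
       exists2 y, In y (code n) & (agreements x y <= floor_nat (a * INR n))%nat) /\
    (length (code n) <= 2 ^ L n)%nat /\
    ((2 <= n)%nat ->
     INR (L n) <= Kdiv (1 / INR q) a * INR n + 20 * (log2 (INR n) + log2 (log2 (INR q)))).
Proof.
  intros Hq Ha.
  destruct (choice (fun n (c : list (list nat) * nat) =>
    incl (fst c) (words q n) /\
    (forall x, valid_input q x -> length x = n ->
       exists2 y, In y (fst c) & (agreements x y <= floor_nat (a * INR n))%nat) /\
    (length (fst c) <= 2 ^ snd c)%nat /\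
    ((2 <= n)%nat ->
     INR (snd c) <= Kdiv (1 / INR q) a * INR n + 20 * (log2 (INR n) + log2 (log2 (INR q))))))
    as [c Hc].
  - intros n. destruct (short_covering_code q a n Hq Ha) as (Ys & L & H). now exists (Ys, L).
  - now exists (fun n => fst (c n)), (fun n => snd (c n)).
Qed.

(** * Algorithms that play a codeword *)

Fixpoint decode (L : nat) (t : tape) : nat :=
  match L with
  | O => 0%nat
  | S L' => (decode L' t + Nat.b2n (t L') * 2 ^ L')%nat
  end.

Lemma decode_ext (L : nat) (t t' : tape) :
  (forall j, (j < L)%nat -> t j = t' j) -> decode L t = decode L t'.
Proof.
  induction L as [|L IH]; intros H; simpl; auto.
  rewrite IH, H; [reflexivity | lia | intros j Hj; apply H; lia].
Qed.

Lemma decode_testbit (L i : nat) : decode L (Nat.testbit i) = (i mod 2 ^ L)%nat.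
Proof.
  induction L as [|L IH]; simpl decode.
  - now rewrite Nat.pow_0_r, Nat.mod_1_r.
  - rewrite IH, (Nat.testbit_spec' i L), Nat.pow_succ_r', (Nat.mul_comm 2), Nat.Div0.mod_mul_r. lia.
Qed.

Definition play_codeword (code : nat -> list (list nat)) (L : nat -> nat) : algorithm :=
  fun n pre t => nth (length pre) (nth (decode (L n) t) (code n) []) 0%nat.

Lemma out_play_codeword (code : nat -> list (list nat)) (L : nat -> nat) (x : list nat) (t : tape)
    (i : nat) : (i < length x)%nat ->
  out (play_codeword code L) x t i = nth i (nth (decode (L (length x)) t) (code (length x)) []) 0%nat.
Proof.
  intros Hi. unfold out, play_codeword. rewrite length_firstn. f_equal. lia.
Qed.

Lemma reads_at_most_play_codeword (code : nat -> list (list nat)) (L : nat -> nat) (O : oracle)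
    (x : list nat) : reads_at_most (play_codeword code L) O x (INR (L (length x))).
Proof.
  intros t' Ht' i Hi. rewrite !out_play_codeword by exact Hi.
  rewrite (decode_ext _ t' (O x)); [reflexivity|].
  intros j Hj. apply Ht', lt_INR, Hj.
Qed.

Lemma reads_at_most_mono (A : algorithm) (O : oracle) (x : list nat) (b b' : R) :
  b <= b' -> reads_at_most A O x b -> reads_at_most A O x b'.
Proof. intros Hb H t' Ht'. apply H. intros j Hj. apply Ht'. lra. Qed.

Lemma nth_valid_lt (q : nat) (y : list nat) (i : nat) : (0 < q)%nat -> valid_input q y ->
  (nth i y 0 < q)%nat.
Proof. intros Hq Hy. destruct (nth_in_or_default i y 0%nat) as [H | ->]; [now apply Hy | exact Hq]. Qed.

Lemma algorithm_of_codes (q : nat) (code : nat -> list (list nat)) (L m : nat -> nat) :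
  (0 < q)%nat -> (forall n, incl (code n) (words q n)) ->
  (forall n, (length (code n) <= 2 ^ L n)%nat) ->
  (forall x, valid_input q x ->
     exists2 y, In y (code (length x)) & (agreements x y <= m (length x))%nat) ->
  exists (A : algorithm) (O : oracle), (forall n pre t, (A n pre t < q)%nat) /\
    forall x, valid_input q x ->
      (cost A O x <= m (length x))%nat /\ reads_at_most A O x (INR (L (length x))).
Proof.
  intros Hq Hcode HL Hcover.
  assert (Hindex : forall x, exists i, valid_input q x ->
    (i < length (code (length x)))%nat /\ (agreements x (nth i (code (length x)) []) <= m (length x))%nat).
  { intros x. destruct (classic (valid_input q x)) as [Hv | Hv]; [|exists 0%nat; tauto].
    destruct (Hcover x Hv) as [y Hy Hxy]. destruct (In_nth _ _ [] Hy) as [i [Hi <-]].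
    now exists i. }
  destruct (choice _ Hindex) as [index Hindex_spec].
  exists (play_codeword code L), (fun x => Nat.testbit (index x)). split.
  - intros n pre t. apply nth_valid_lt; [exact Hq|].
    destruct (nth_in_or_default (decode (L n) t) (code n) []) as [Hin | ->].
    + now apply (in_words q n), Hcode.
    + intros c [].
  - intros x Hv. split; [|apply reads_at_most_play_codeword].
    destruct (Hindex_spec x Hv) as [Hi Hagr].
    set (n := length x) in *. set (y := nth (index x) (code n) []) in Hagr.
    assert (Hy : length y = n) by (apply (in_words q n), Hcode, nth_In, Hi).
    assert (Hdecode : decode (L n) (Nat.testbit (index x)) = index x).
    { rewrite decode_testbit. apply Nat.mod_small. specialize (HL n). lia. }
    unfold cost. rewrite agreements_spec in Hagr by exact Hy. fold n.
    erewrite filter_ext_in; [exact Hagr|].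
    intros i Hi'. apply in_seq in Hi'. rewrite out_play_codeword by (fold n; lia).
    fold n. rewrite Hdecode. reflexivity.
Qed.

Theorem theorem11 :
  exists C : R, forall q : nat, (2 <= q)%nat ->
  forall alpha : R, 0 < alpha < 1 / INR q ->
    Kdiv (1 / INR q) alpha = (1 - hq (INR q) (1 - alpha)) * log2 (INR q) /\
    exists (A : algorithm) (O : oracle),
      (forall n pre t, (A n pre t < q)%nat) /\
      forall x : list nat, valid_input q x ->
        INR (cost A O x) <= alpha * INR (length x) /\
        ((2 <= length x)%nat ->
         reads_at_most A O x
           (Kdiv (1 / INR q) alpha * INR (length x)
            + C * (log2 (INR (length x)) + log2 (log2 (INR q))))).
Proof.
  exists 20. intros q Hq a Ha.
  split; [apply Kdiv_hq; [apply (lt_INR 1); lia | exact Ha]|].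
  destruct (short_covering_codes q a Hq Ha) as (code & L & Hcode).
  destruct (algorithm_of_codes q code L (fun n => floor_nat (a * INR n))) as (A & O & HA & HAO).
  - lia.
  - apply Hcode.
  - apply Hcode.
  - intros x Hv. now apply Hcode.
  - exists A, O. split; [exact HA|]. intros x Hv.
    destruct (HAO x Hv) as [Hcost Hreads]. split.
    + apply le_INR in Hcost. eapply Rle_trans; [exact Hcost|].
      apply floor_nat_spec, Rmult_le_pos; [lra | apply pos_INR].
    + intros Hn. eapply reads_at_most_mono; [|exact Hreads]. now apply Hcode.
Qed.
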